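(* The theory $\mathsf{iGL}$ is closed under box-translation: for every modal proposition $A$, if $\mathsf{iGL}\vdash A$ then $\mathsf{iGL}\vdash A^\Box$.
   Context: Modal language: propositional variables, $\bot$, $\wedge,\vee,\to$, $\Box$; atomic = variables and $\bot$. $\mathsf{iGL}$: intuitionistic propositional logic in the modal language plus $\Box(A\to B)\to(\Box A\to\Box B)$, $\Box A\to\Box\Box A$, $\Box(\Box A\to A)\to\Box A$, closed under modus ponens and necessitation. Box-translation: $A^\Box:=A\wedge\Box A$ for atomic $A$; $(A\circ B)^\Box:=A^\Box\circ B^\Box$ for $\circ\in\{\wedge,\vee\}$; $(A\to B)^\Box:=(A^\Box\to B^\Box)\wedge\Box(A^\Box\to B^\Box)$; $(\Box A)^\Box:=\Box(A^\Box)$. *)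

From Stdlib Require Import Arith.

Inductive form : Type :=
| Var : nat -> form
| Bot : form
| And : form -> form -> form
| Or  : form -> form -> form
| Imp : form -> form -> form
| Box : form -> form.

Inductive iGL : form -> Prop :=
| ax_K   : forall A B, iGL (Imp A (Imp B A))
| ax_S   : forall A B C,
    iGL (Imp (Imp A (Imp B C)) (Imp (Imp A B) (Imp A C)))
| ax_AndI : forall A B, iGL (Imp A (Imp B (And A B)))
| ax_AndE1 : forall A B, iGL (Imp (And A B) A)
| ax_AndE2 : forall A B, iGL (Imp (And A B) B)
| ax_OrI1 : forall A B, iGL (Imp A (Or A B))
| ax_OrI2 : forall A B, iGL (Imp B (Or A B))
| ax_OrE : forall A B C,
    iGL (Imp (Imp A C) (Imp (Imp B C) (Imp (Or A B) C)))
| ax_EFQ : forall A, iGL (Imp Bot A)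
| ax_Kbox : forall A B, iGL (Imp (Box (Imp A B)) (Imp (Box A) (Box B)))
| ax_4 : forall A, iGL (Imp (Box A) (Box (Box A)))
| ax_Lob : forall A, iGL (Imp (Box (Imp (Box A) A)) (Box A))
| rule_MP : forall A B, iGL (Imp A B) -> iGL A -> iGL B
| rule_Nec : forall A, iGL A -> iGL (Box A).

Fixpoint boxtr (A : form) : form :=
  match A with
  | Var p => And (Var p) (Box (Var p))
  | Bot => And Bot (Box Bot)
  | And B C => And (boxtr B) (boxtr C)
  | Or B C => Or (boxtr B) (boxtr C)
  | Imp B C => And (Imp (boxtr B) (boxtr C)) (Box (Imp (boxtr B) (boxtr C)))
  | Box B => Box (boxtr B)
  end.

(* Every translated formula
   proves its own box (A^□ → □A^□, by induction on A, using axiom 4 at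
   variables and implications), so a context of translated formulas can be
   boxed, and a derivation from it can be necessitated.  Hence implication
   introduction is sound for translated formulas, [D^□, P^□ ⊢ Q^□] giving
   [D^□ ⊢ (P → Q)^□], and every axiom of iGL is translated into a closed
   derivation built from translated hypotheses, introduction and modus ponens;
   the two rules are immediate. *)

From Stdlib Require Import List.
Import ListNotations.

Inductive Der (G : list form) : form -> Prop :=
| Der_hyp : forall A, In A G -> Der G A
| Der_ax : forall A, iGL A -> Der G A
| Der_mp : forall A B, Der G (Imp A B) -> Der G A -> Der G B.

Lemma iGL_refl (A : form) : iGL (Imp A A).
Proof.
  apply (rule_MP _ _ (rule_MP _ _ (ax_S A (Imp A A) A) (ax_K A (Imp A A)))).
  apply ax_K.
Qed.

Lemma Der_nil (A : form) : Der [] A -> iGL A.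
Proof.
  induction 1 as [A [] | | A B _ IHAB _ IHA]; [assumption | exact (rule_MP _ _ IHAB IHA)].
Qed.

Lemma Der_deduction (G : list form) (A B : form) :
  Der (A :: G) B -> Der G (Imp A B).
Proof.
  induction 1 as [B [<- | HB] | B HB | B C _ IHBC _ IHB].
  - apply Der_ax, iGL_refl.
  - apply (Der_mp _ B); [apply Der_ax, ax_K | now apply Der_hyp].
  - apply (Der_mp _ B); [apply Der_ax, ax_K | now apply Der_ax].
  - exact (Der_mp _ _ _ (Der_mp _ _ _ (Der_ax _ _ (ax_S _ _ _)) IHBC) IHB).
Qed.

Lemma Der_mp1 (G : list form) (A B : form) :
  iGL (Imp A B) -> Der G A -> Der G B.
Proof. intros HAB HA; exact (Der_mp _ _ _ (Der_ax _ _ HAB) HA). Qed.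

Lemma Der_mp2 (G : list form) (A B C : form) :
  iGL (Imp A (Imp B C)) -> Der G A -> Der G B -> Der G C.
Proof. intros HABC HA; apply Der_mp; exact (Der_mp1 _ _ _ HABC HA). Qed.

Lemma Der_box_mp (G : list form) (A B : form) :
  Der G (Box (Imp A B)) -> Der G (Box A) -> Der G (Box B).
Proof. apply Der_mp2, ax_Kbox. Qed.

Lemma Der_box_map (G : list form) (A B : form) :
  iGL (Imp A B) -> Der G (Box A) -> Der G (Box B).
Proof. intro HAB; apply Der_box_mp, Der_ax, rule_Nec, HAB. Qed.

Lemma Der_box_and (G : list form) (A B : form) :
  Der G (Box A) -> Der G (Box B) -> Der G (Box (And A B)).
Proof. intros HA; apply Der_box_mp, (Der_box_map _ _ _ (ax_AndI A B)), HA. Qed.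

Lemma Der_and_box_box (G : list form) (A : form) :
  Der G (And A (Box A)) -> Der G (Box (And A (Box A))).
Proof.
  intro H.
  assert (HA : Der G (Box A)) by exact (Der_mp1 _ _ _ (ax_AndE2 _ _) H).
  exact (Der_box_and _ _ _ HA (Der_mp1 _ _ _ (ax_4 _) HA)).
Qed.

Lemma Der_boxtr_box (A : form) (G : list form) :
  Der G (boxtr A) -> Der G (Box (boxtr A)).
Proof.
  revert G; induction A as [p | | A IHA B IHB | A IHA B IHB | A _ B _ | A _];
    intros G H; simpl in *.
  - now apply Der_and_box_box.
  - exact (Der_mp1 _ _ _ (ax_EFQ _) (Der_mp1 _ _ _ (ax_AndE1 _ _) H)).
  - apply Der_box_and; [apply IHA | apply IHB].
    + exact (Der_mp1 _ _ _ (ax_AndE1 _ _) H).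
    + exact (Der_mp1 _ _ _ (ax_AndE2 _ _) H).
  - refine (Der_mp _ _ _ (Der_mp2 _ _ _ _ (ax_OrE _ _ _) _ _) H);
      apply Der_deduction.
    + apply (Der_box_map _ _ _ (ax_OrI1 _ _)), IHA, Der_hyp; now left.
    + apply (Der_box_map _ _ _ (ax_OrI2 _ _)), IHB, Der_hyp; now left.
  - now apply Der_and_box_box.
  - exact (Der_mp1 _ _ _ (ax_4 _) H).
Qed.

Lemma Der_box_nec (G G' : list form) (X : form) :
  Der G X -> (forall h, In h G -> Der G' (Box h)) -> Der G' (Box X).
Proof.
  induction 1 as [X HX | X HX | X Y _ IHXY _ IHX]; intro HG.
  - now apply HG.
  - now apply Der_ax, rule_Nec.
  - exact (Der_box_mp _ _ _ (IHXY HG) (IHX HG)).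
Qed.

Lemma Der_boxtr_ctx_box (D : list form) (h : form) :
  In h (map boxtr D) -> Der (map boxtr D) (Box h).
Proof.
  intro Hh; destruct (proj1 (in_map_iff _ _ _) Hh) as [A [<- _]].
  now apply Der_boxtr_box, Der_hyp.
Qed.

Lemma Der_boxtr_lam (D : list form) (P Q : form) :
  Der (map boxtr (P :: D)) (boxtr Q) -> Der (map boxtr D) (boxtr (Imp P Q)).
Proof.
  intro H; apply Der_deduction in H; simpl.
  exact (Der_mp2 _ _ _ _ (ax_AndI _ _) H
           (Der_box_nec _ _ _ H (Der_boxtr_ctx_box D))).
Qed.

Lemma Der_boxtr_imp (G : list form) (P Q : form) :
  Der G (boxtr (Imp P Q)) -> Der G (Imp (boxtr P) (boxtr Q)).
Proof. apply Der_mp1, ax_AndE1. Qed.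

Lemma Der_boxtr_app (G : list form) (P Q : form) :
  Der G (boxtr (Imp P Q)) -> Der G (boxtr P) -> Der G (boxtr Q).
Proof. intro H; apply Der_mp, Der_boxtr_imp, H. Qed.

Ltac boxtr_hyp := apply Der_hyp; simpl; tauto.

Lemma iGL_of_Der_boxtr_nil (A : form) :
  Der (map boxtr []) (boxtr A) -> iGL (boxtr A).
Proof. apply Der_nil. Qed.

Theorem proposition4p16 : forall A : form, iGL A -> iGL (boxtr A).
Proof.
  induction 1 as [ | A B C | | | | | | A B C | | A B | | | A B _ IHAB _ IHA | A _ IHA].
  1-12: apply iGL_of_Der_boxtr_nil; repeat apply Der_boxtr_lam; simpl.
  - boxtr_hyp.
  - apply (Der_boxtr_app _ B); apply (Der_boxtr_app _ A); boxtr_hyp.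
  - apply (Der_mp2 _ _ _ _ (ax_AndI _ _)); boxtr_hyp.
  - eapply (Der_mp1 _ _ _ (ax_AndE1 _ _)); boxtr_hyp.
  - eapply (Der_mp1 _ _ _ (ax_AndE2 _ _)); boxtr_hyp.
  - eapply (Der_mp1 _ _ _ (ax_OrI1 _ _)); boxtr_hyp.
  - eapply (Der_mp1 _ _ _ (ax_OrI2 _ _)); boxtr_hyp.
  - refine (Der_mp _ _ _ (Der_mp2 _ _ _ _ (ax_OrE _ _ _)
             (Der_boxtr_imp _ A C _) (Der_boxtr_imp _ B C _)) _); boxtr_hyp.
  - apply (Der_mp1 _ _ _ (ax_EFQ _)), (Der_mp1 _ _ _ (ax_AndE1 _ (Box Bot))); boxtr_hyp.
  - apply (Der_box_mp _ (boxtr A)); [eapply (Der_box_map _ _ _ (ax_AndE1 _ _)) |]; boxtr_hyp.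
  - eapply (Der_mp1 _ _ _ (ax_4 _)); boxtr_hyp.
  - eapply (Der_mp1 _ _ _ (ax_Lob _)); eapply (Der_box_map _ _ _ (ax_AndE1 _ _)); boxtr_hyp.
  - exact (rule_MP _ _ (rule_MP _ _ (ax_AndE1 _ _) IHAB) IHA).
  - exact (rule_Nec _ IHA).
Qed.
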